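(* Let $(X,D)$ be a JS-metric space with a partial order $\le$ and let $F:X^2\to X$ have the mixed monotone property and satisfy, for some $k\in[0,1)$, $D(F(x,y),F(u,v))+D(F(y,x),F(v,u))\le k[D(x,u)+D(y,v)]$ for all $x\ge u$, $y\le v$. Let $w$ and $\tilde z$ be coupled fixed points of $F$ that are incomparable in $X^2$, and suppose there exists $z^*\in X^2$ which is an upper bound or a lower bound of both $w$ and $\tilde z$ in $X^2$, with $D_+(w,z^* )<\infty$ and $D_+(\tilde z,z^* )<\infty$. Then $w=\tilde z$.
   Context: Arithmetic is carried out in the extended reals. $(X,D)$ is a JS-metric space: $D:X\times X\to[0,\infty]$ satisfies (D1) $D(x,y)=0\Rightarrow x=y$; (D2) $D(x,y)=D(y,x)$; (D3) there exists $c>0$ such that for all $x,y\in X$ and every sequence $(x_n)$ with $\lim_n D(x_n,x)=0$, $D(x,y)\le c\limsup_n D(x_n,y)$. $D_+((x,y),(u,v))=D(x,u)+D(y,v)$. Partial order on $X^2$: $(u,v)\le(x,y)\iff u\le x$ and $v\ge y$; comparable means one is $\le$ the other. Mixed monotone property: $x_1\le x_2\Rightarrow F(x_1,y)\le F(x_2,y)$ and $y_1\le y_2\Rightarrow F(x,y_1)\ge F(x,y_2)$. A coupled fixed point is $(x,y)$ with $x=F(x,y)$, $y=F(y,x)$. *)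

From Stdlib Require Import Reals.
Open Scope R_scope.

(* Extended reals [0, +oo] (nonnegativity of D is a separate hypothesis). *)
Inductive ER : Type := Fin (r : R) | Inf.

Definition ER_add (a b : ER) : ER :=
  match a, b with
  | Fin x, Fin y => Fin (x + y)
  | _, _ => Inf
  end.

(* scalar multiplication by a real constant k >= 0, convention 0 * oo = 0 *)
Definition ER_scal (k : R) (a : ER) : ER :=
  match a with
  | Fin x => Fin (k * x)
  | Inf => if Req_EM_T k 0 then Fin 0 else Inf
  end.

Definition ER_le (a b : ER) : Prop :=
  match a, b with
  | Fin x, Fin y => x <= y
  | _, Inf => True
  | Inf, Fin _ => False
  end.

Definition ER_finite (a : ER) : Prop := a <> Inf.

Definition ER_is_lub (S : ER -> Prop) (l : ER) : Prop :=
  (forall e, S e -> ER_le e l) /\ (forall m, (forall e, S e -> ER_le e m) -> ER_le l m).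

Definition ER_is_glb (S : ER -> Prop) (l : ER) : Prop :=
  (forall e, S e -> ER_le l e) /\ (forall m, (forall e, S e -> ER_le m e) -> ER_le m l).

Definition ER_is_limsup (u : nat -> ER) (L : ER) : Prop :=
  exists s : nat -> ER,
    (forall N, ER_is_lub (fun e => exists n, (N <= n)%nat /\ e = u n) (s N)) /\
    ER_is_glb (fun e => exists N, e = s N) L.

Definition ER_tends_to_0 (u : nat -> ER) : Prop :=
  forall eps, 0 < eps -> exists N, forall n, (N <= n)%nat ->
    exists r, u n = Fin r /\ Rabs r < eps.

(* JS-metric (Jleli–Samet) axioms D1–D3, with D : X x X -> [0, oo]. *)
Definition JS_metric {X : Type} (D : X -> X -> ER) : Prop :=
  (forall x y r, D x y = Fin r -> 0 <= r) /\
  (forall x y, D x y = Fin 0 -> x = y) /\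
  (forall x y, D x y = D y x) /\
  (exists c, 0 < c /\
     forall (x y : X) (xs : nat -> X),
       ER_tends_to_0 (fun n => D (xs n) x) ->
       forall L, ER_is_limsup (fun n => D (xs n) y) L ->
       ER_le (D x y) (ER_scal c L)).

Definition partial_order {X : Type} (le : X -> X -> Prop) : Prop :=
  (forall x, le x x) /\
  (forall x y, le x y -> le y x -> x = y) /\
  (forall x y z, le x y -> le y z -> le x z).

Definition le2 {X : Type} (le : X -> X -> Prop) (p q : X * X) : Prop :=
  le (fst p) (fst q) /\ le (snd q) (snd p).

Definition D_plus {X : Type} (D : X -> X -> ER) (p q : X * X) : ER :=
  ER_add (D (fst p) (fst q)) (D (snd p) (snd q)).

Definition mixed_monotone {X : Type} (le : X -> X -> Prop) (F : X -> X -> X) : Prop :=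
  (forall x1 x2 y, le x1 x2 -> le (F x1 y) (F x2 y)) /\
  (forall x y1 y2, le y1 y2 -> le (F x y2) (F x y1)).

Definition coupled_fixed_point {X : Type} (F : X -> X -> X) (p : X * X) : Prop :=
  fst p = F (fst p) (snd p) /\ snd p = F (snd p) (fst p).

(* Let T(x, y) = (F(x, y), F(y, x)), so that coupled fixed points are the fixed points
   of T. By the mixed monotone property T preserves the order of X^2, so the orbit of the
   common bound z* stays comparable with every coupled fixed point v that is comparable
   with z*; the contraction hypothesis then gives D+(T^n z*, v) <= k^n D+(z*, v), which
   tends to 0 since D+(z*, v) is finite. Hence the components of T^n z* converge to those
   of w and of z~, and limits in a JS-metric space are unique by (D3) and (D1). *)

From Stdlib Require Import Reals Lra Classical ClassicalEpsilon.
Open Scope R_scope.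

Lemma ER_add_Fin (a b : ER) (r : R) : ER_add a b = Fin r ->
  exists x y, a = Fin x /\ b = Fin y /\ r = x + y.
Proof.
  destruct a as [x|], b as [y|]; simpl; try discriminate.
  intros H; inversion H; eauto.
Qed.

Lemma ER_lub_exists (S : ER -> Prop) : (exists e, S e) -> exists l, ER_is_lub S l.
Proof.
  intros [e0 He0].
  assert (Inf_ub : forall e, S e -> ER_le e Inf) by (intros [] _; exact I).
  destruct (classic (S Inf)) as [HInf|HInf].
  - exists Inf; split; [exact Inf_ub|].
    intros m Hm; exact (Hm Inf HInf).
  - set (E := fun r => S (Fin r)).
    assert (HE : exists r, E r).
    { destruct e0 as [r0|]; [now exists r0|contradiction]. }
    destruct (classic (bound E)) as [Hb|Hnb].
    + destruct (completeness E Hb HE) as [l [Hl_ub Hl_least]].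
      exists (Fin l); split.
      * intros [r|] Hr; [exact (Hl_ub r Hr)|contradiction].
      * intros [a|] Hm; [|exact I].
        apply Hl_least; intros r Hr; exact (Hm (Fin r) Hr).
    + exists Inf; split; [exact Inf_ub|].
      intros [a|] Hm; [|exact I].
      apply Hnb; exists a; intros r Hr; exact (Hm (Fin r) Hr).
Qed.

Lemma ER_tends_to_0_limsup (u : nat -> ER) :
  (forall n r, u n = Fin r -> 0 <= r) -> ER_tends_to_0 u -> ER_is_limsup u (Fin 0).
Proof.
  intros u_ge0 u_to0.
  set (Tail N := fun e => exists n, (N <= n)%nat /\ e = u n).
  assert (sup_ex : forall N, {s | ER_is_lub (Tail N) s}).
  { intros N; apply constructive_indefinite_description, ER_lub_exists.
    exists (u N), N; split; [apply Nat.le_refl|reflexivity]. }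
  set (s N := proj1_sig (sup_ex N)).
  assert (s_lub : forall N, ER_is_lub (Tail N) (s N)) by (intros N; exact (proj2_sig (sup_ex N))).
  assert (s_ge0 : forall N, ER_le (Fin 0) (s N)).
  { intros N; destruct (s_lub N) as [s_ub _].
    specialize (s_ub (u N) (ex_intro _ N (conj (Nat.le_refl N) eq_refl))).
    destruct (s N); [|exact I].
    destruct (u N) as [x|] eqn:E; [|contradiction].
    specialize (u_ge0 N x E); simpl in *; lra. }
  assert (s_small : forall eps, 0 < eps -> exists N, ER_le (s N) (Fin eps)).
  { intros eps Heps; destruct (u_to0 eps Heps) as [N HN]; exists N.
    apply (proj2 (s_lub N)); intros e [n [Hn ->]].
    destruct (HN n Hn) as [r [-> Hr]]; apply Rabs_def2 in Hr; simpl; lra. }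
  exists s; split; [exact s_lub|split].
  - intros e [N ->]; apply s_ge0.
  - intros [a|] Hm.
    + simpl; apply Rnot_lt_le; intro Ha.
      destruct (s_small (a / 2)) as [N HN]; [lra|].
      specialize (Hm _ (ex_intro _ N eq_refl)).
      destruct (s N); simpl in *; [lra|contradiction].
    + destruct (s_small 1) as [N HN]; [lra|].
      specialize (Hm _ (ex_intro _ N eq_refl)).
      destruct (s N); simpl in *; contradiction.
Qed.

Lemma ER_le_geometric (u : nat -> ER) (k r0 : R) :
  0 <= k -> u 0%nat = Fin r0 ->
  (forall n, ER_le (u (S n)) (ER_scal k (u n))) ->
  forall n, exists r, u n = Fin r /\ r <= k ^ n * r0.
Proof.
  intros Hk Hu0 Hstep; induction n as [|n [r [Hr Hle]]].
  - exists r0; split; [exact Hu0|simpl; lra].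
  - specialize (Hstep n); rewrite Hr in Hstep; simpl in Hstep.
    destruct (u (S n)) as [r'|]; [|contradiction].
    exists r'; split; [reflexivity|simpl in Hstep |- *].
    assert (k * r <= k * (k ^ n * r0)) by (apply Rmult_le_compat_l; lra); lra.
Qed.

Lemma ER_tends_to_0_geometric (u : nat -> ER) (k : R) :
  (forall n r, u n = Fin r -> 0 <= r) -> 0 <= k < 1 ->
  (forall n, ER_le (u (S n)) (ER_scal k (u n))) -> ER_finite (u 0%nat) ->
  ER_tends_to_0 u.
Proof.
  intros u_ge0 Hk Hstep Hfin.
  destruct (u 0%nat) as [r0|] eqn:Hu0; [|congruence].
  pose proof (u_ge0 _ _ Hu0) as Hr0.
  pose proof (ER_le_geometric u k r0 (proj1 Hk) Hu0 Hstep) as Hgeom.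
  intros eps Heps.
  destruct (pow_lt_1_zero k ltac:(rewrite Rabs_right; lra) (eps / (r0 + 1)))
    as [N HN]; [apply Rdiv_lt_0_compat; lra|].
  exists N; intros n Hn.
  destruct (Hgeom n) as [r [Hr Hle]]; exists r; split; [exact Hr|].
  pose proof (u_ge0 _ _ Hr) as Hr_ge0.
  assert (Hkn : 0 <= k ^ n) by (apply pow_le; lra).
  specialize (HN n Hn); rewrite Rabs_right in HN by lra.
  assert (k ^ n * (r0 + 1) < eps).
  { apply (Rmult_lt_compat_r (r0 + 1)) in HN; [|lra].
    unfold Rdiv in HN; rewrite Rmult_assoc, Rinv_l in HN by lra; lra. }
  rewrite Rabs_right; nra.
Qed.

Lemma ER_tends_to_0_add (u v : nat -> ER) :
  (forall n r, u n = Fin r -> 0 <= r) -> (forall n r, v n = Fin r -> 0 <= r) ->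
  ER_tends_to_0 (fun n => ER_add (u n) (v n)) -> ER_tends_to_0 u /\ ER_tends_to_0 v.
Proof.
  intros u_ge0 v_ge0 Huv.
  split; intros eps Heps; destruct (Huv eps Heps) as [N HN]; exists N; intros n Hn;
    destruct (HN n Hn) as [r [Hr Hlt]];
    destruct (ER_add_Fin _ _ _ Hr) as [a [b [Ha [Hb ->]]]];
    pose proof (u_ge0 _ _ Ha); pose proof (v_ge0 _ _ Hb);
    rewrite Rabs_right in Hlt by lra.
  - exists a; split; [exact Ha|rewrite Rabs_right; lra].
  - exists b; split; [exact Hb|rewrite Rabs_right; lra].
Qed.

Lemma JS_limit_unique (X : Type) (D : X -> X -> ER) (a b : X) (xs : nat -> X) :
  JS_metric D ->
  ER_tends_to_0 (fun n => D (xs n) a) -> ER_tends_to_0 (fun n => D (xs n) b) -> a = b.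
Proof.
  intros [D_ge0 [D_eq0 [_ [c [Hc D3]]]]] Ha Hb.
  pose proof (D3 a b xs Ha (Fin 0)
               (ER_tends_to_0_limsup _ (fun n => D_ge0 _ _) Hb)) as Hab.
  destruct (D a b) as [r|] eqn:E; [|contradiction].
  apply D_eq0; rewrite E; apply D_ge0 in E; simpl in Hab; f_equal; nra.
Qed.

Definition coupled_map {X : Type} (F : X -> X -> X) (q : X * X) : X * X :=
  (F (fst q) (snd q), F (snd q) (fst q)).

Section CoupledContraction.

Variables (X : Type) (D : X -> X -> ER) (le : X -> X -> Prop) (F : X -> X -> X) (k : R).

Hypothesis D_ge0 : forall x y r, D x y = Fin r -> 0 <= r.
Hypothesis D_sym : forall x y, D x y = D y x.
Hypothesis le_trans : forall x y z, le x y -> le y z -> le x z.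
Hypothesis F_mixed : mixed_monotone le F.
Hypothesis k_range : 0 <= k < 1.
Hypothesis F_contract : forall x y u v, le u x -> le y v ->
  ER_le (ER_add (D (F x y) (F u v)) (D (F y x) (F v u)))
        (ER_scal k (ER_add (D x u) (D y v))).

Let T := coupled_map F.

Lemma coupled_map_fixed (v : X * X) : coupled_fixed_point F v -> T v = v.
Proof. destruct v as [v1 v2]; intros [Hv1 Hv2]; unfold T, coupled_map; simpl in *; congruence. Qed.

Lemma coupled_map_le2 (p q : X * X) : le2 le p q -> le2 le (T p) (T q).
Proof.
  destruct F_mixed as [F_incr F_decr].
  intros [H1 H2]; split; simpl.
  - apply le_trans with (F (fst q) (snd p)); [apply F_incr|apply F_decr]; assumption.
  - apply le_trans with (F (snd p) (fst q)); [apply F_incr|apply F_decr]; assumption.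
Qed.

Lemma coupled_iter_le2 (p q : X * X) (n : nat) :
  le2 le p q -> le2 le (Nat.iter n T p) (Nat.iter n T q).
Proof. intros Hpq; induction n as [|n IH]; [exact Hpq|apply coupled_map_le2, IH]. Qed.

Lemma coupled_iter_fixed (v : X * X) (n : nat) :
  coupled_fixed_point F v -> Nat.iter n T v = v.
Proof.
  intros Hv; induction n as [|n IH]; [reflexivity|].
  simpl; rewrite IH; apply coupled_map_fixed, Hv.
Qed.

Lemma D_plus_sym (p q : X * X) : D_plus D p q = D_plus D q p.
Proof. unfold D_plus; rewrite (D_sym (fst p)), (D_sym (snd p)); reflexivity. Qed.

Lemma coupled_map_contract (p q : X * X) :
  le2 le p q \/ le2 le q p ->
  ER_le (D_plus D (T p) (T q)) (ER_scal k (D_plus D p q)).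
Proof.
  intros [[H1 H2]|[H1 H2]].
  - rewrite (D_plus_sym (T p)), (D_plus_sym p).
    exact (F_contract (fst q) (snd q) (fst p) (snd p) H1 H2).
  - exact (F_contract (fst p) (snd p) (fst q) (snd q) H1 H2).
Qed.

Lemma coupled_iter_tends_to (v p : X * X) :
  coupled_fixed_point F v -> le2 le v p \/ le2 le p v -> ER_finite (D_plus D p v) ->
  ER_tends_to_0 (fun n => D (fst (Nat.iter n T p)) (fst v)) /\
  ER_tends_to_0 (fun n => D (snd (Nat.iter n T p)) (snd v)).
Proof.
  intros Hv Hcomp Hfin.
  assert (orbit_comparable : forall n, le2 le (Nat.iter n T p) v \/ le2 le v (Nat.iter n T p)).
  { intros n; rewrite <- (coupled_iter_fixed v n Hv).
    destruct Hcomp; [right|left]; apply coupled_iter_le2; assumption. }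
  apply ER_tends_to_0_add; try (intros n; apply D_ge0).
  apply (ER_tends_to_0_geometric _ k); [|exact k_range| |exact Hfin].
  - intros n r Hr; destruct (ER_add_Fin _ _ _ Hr) as [a [b [Ha [Hb ->]]]].
    apply D_ge0 in Ha; apply D_ge0 in Hb; lra.
  - intros n; change (ER_le (D_plus D (T (Nat.iter n T p)) v)
                            (ER_scal k (D_plus D (Nat.iter n T p) v))).
    rewrite <- (coupled_map_fixed v Hv) at 1.
    apply coupled_map_contract, orbit_comparable.
Qed.

End CoupledContraction.

Theorem mainTheorem13 (X : Type) (D : X -> X -> ER) (le : X -> X -> Prop)
  (F : X -> X -> X) (k : R) (w z zs : X * X) :
  JS_metric D ->
  partial_order le ->
  mixed_monotone le F ->
  0 <= k < 1 ->
  (forall x y u v, le u x -> le y v ->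
     ER_le (ER_add (D (F x y) (F u v)) (D (F y x) (F v u)))
           (ER_scal k (ER_add (D x u) (D y v)))) ->
  coupled_fixed_point F w ->
  coupled_fixed_point F z ->
  ~ le2 le w z -> ~ le2 le z w ->
  ((le2 le w zs /\ le2 le z zs) \/ (le2 le zs w /\ le2 le zs z)) ->
  ER_finite (D_plus D w zs) ->
  ER_finite (D_plus D z zs) ->
  w = z.
Proof.
  intros HJS [_ [_ le_trans]] F_mixed Hk F_contract Hw Hz _ _ Hbound Hfw Hfz.
  pose proof HJS as [D_ge0 [_ [D_sym _]]].
  assert (Hw_comp : le2 le w zs \/ le2 le zs w) by tauto.
  assert (Hz_comp : le2 le z zs \/ le2 le zs z) by tauto.
  rewrite (D_plus_sym X D D_sym) in Hfw, Hfz.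
  pose proof (coupled_iter_tends_to X D le F k D_ge0 D_sym le_trans F_mixed Hk F_contract)
    as orbit_tends_to.
  destruct (orbit_tends_to w zs Hw Hw_comp Hfw) as [W1 W2].
  destruct (orbit_tends_to z zs Hz Hz_comp Hfz) as [Z1 Z2].
  destruct w as [w1 w2], z as [z1 z2]; f_equal.
  - exact (JS_limit_unique X D w1 z1 _ HJS W1 Z1).
  - exact (JS_limit_unique X D w2 z2 _ HJS W2 Z2).
Qed.
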